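(* Let $q$ be a prime power and $n\ge k\ge0$ integers. Let $V_1,\dots,V_k$ be subspaces of $\mathbb{F}_q^n$ such that $\dim\big(\bigcap_{i\in\Omega}V_i\big)\le k-|\Omega|$ for all nonempty $\Omega\subseteq[k]$. Then there exist subspaces $V_i'$ of $\mathbb{F}_q^n$ with $V_i\subseteq V_i'$, $i=1,\dots,k$, such that (1) $\dim\big(\bigcap_{i\in\Omega}V_i'\big)\le k-|\Omega|$ for all nonempty $\Omega\subseteq[k]$, and (2) $\dim V_i'=k-1$ for all $i\in[k]$. *)

From mathcomp Require Import all_boot all_order all_algebra all_field.

From mathcomp Require Import all_boot all_order all_algebra all_field.
From mathcomp Require Import zify.

(* Enlarge the V_i one line at a time.
   Call Om tight when equality holds in the dimension bound. Since
   dim (W_A + W_B) + dim (W_A :&: W_B) = dim W_A + dim W_B and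
   #|A :|: B| + #|A :&: B| = #|A| + #|B|, two tight sets with a common index
   have a tight intersection, so the tight sets containing i have a smallest
   member N. If dim V_i < k - 1 then N <> [set i], and
   S = V_i + \bigcap_(j in N :\ i) V_j has dimension at most dim V_i + 1 < n.
   Adding to V_i a vector v outside S preserves the bound: the intersection
   over a non-tight Om grows by at most one dimension, and over a tight
   Om (which contains N) it does not grow, because v is outside
   V_i + \bigcap_(j in Om :\ i) V_j. *)

Set Implicit Arguments.
Unset Strict Implicit.
Unset Printing Implicit Defensive.

Section CapBounded.
Variables (K : fieldType) (vT : vectType K).
Implicit Types (U W : {vspace vT}) (v : vT).

Lemma dimv_add_line U v : v \notin U -> \dim (U + <[v]>)%VS = (\dim U).+1.
Proof.
move=> vNU; apply/eqP; rewrite eqn_leq; apply/andP; split.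
  rewrite -addn1 (leq_trans (dimv_add_leqif _ _)) //.
  by rewrite leq_add2l dim_vline leq_b1.
by rewrite (ltn_leqif (dimv_leqif_sup (addvSl U <[v]>))) subv_add subvv -memvE.
Qed.

Lemma dimv_cap_add_line U W v :
  (\dim ((U + <[v]>) :&: W)%VS <= (\dim (U :&: W)%VS).+1)%N.
Proof.
have [vU | vNU] := boolP (v \in U).
  by rewrite (addv_idPl _) -?memvE.
have := dimv_sum_cap (U + <[v]>) W; have := dimv_sum_cap U W.
have := dimvS (addvS (addvSl U <[v]>) (subvv W)).
rewrite dimv_add_line //; lia.
Qed.

Lemma dimv_cap_add_line_eq U W v : v \notin (U + W)%VS ->
  \dim ((U + <[v]>) :&: W)%VS = \dim (U :&: W)%VS.
Proof.
move=> vNUW; have vNU : v \notin U by apply: contra vNUW; exact: subvP (addvSl U W) v.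
have sumC : (U + <[v]> + W = (U + W) + <[v]>)%VS by rewrite -!addvA (addvC <[v]>%VS).
have := dimv_sum_cap (U + <[v]>) W; have := dimv_sum_cap U W.
rewrite sumC !dimv_add_line //; lia.
Qed.

Variable I : finType.
Implicit Types (V : I -> {vspace vT}) (A B Om : {set I}).

Definition cap_bounded V := forall Om, Om != set0 ->
  (\dim (\bigcap_(i in Om) V i)%VS <= #|I| - #|Om|)%N.

Definition cap_tight V Om := \dim (\bigcap_(i in Om) V i)%VS == (#|I| - #|Om|)%N.

Lemma bigcapvS V A B : A \subset B ->
  (\bigcap_(i in B) V i <= \bigcap_(i in A) V i)%VS.
Proof.
by move=> /subsetP AB; apply/subv_bigcapP => i /AB iB; apply: bigcapv_inf iB (subvv _).
Qed.

Lemma bigcapv_setU V A B :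
  (\bigcap_(i in A :|: B) V i = \bigcap_(i in A) V i :&: \bigcap_(i in B) V i)%VS.
Proof. exact/big_setU/capvv. Qed.

Lemma cap_tightI V A B : cap_bounded V -> A :&: B != set0 ->
  cap_tight V A -> cap_tight V B -> cap_tight V (A :&: B).
Proof.
move=> hV AB_neq0 /eqP tA /eqP tB.
have AUB_neq0 : A :|: B != set0.
  by apply: contraNneq AB_neq0; rewrite -!subset0 => <-; rewrite subIset ?subsetUl.
have sum_sub : (\bigcap_(i in A) V i + \bigcap_(i in B) V i <=
                \bigcap_(i in (A :&: B)%SET) V i)%VS.
  by rewrite subv_add !bigcapvS ?subsetIl ?subsetIr.
have := dimvS sum_sub; have := hV _ AUB_neq0; rewrite bigcapv_setU.
have := dimv_sum_cap (\bigcap_(i in A) V i) (\bigcap_(i in B) V i).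
rewrite /cap_tight eqn_leq hV // tA tB.
have := cardsUI A B; have := max_card A; have := max_card B; have := max_card (A :|: B).
lia.
Qed.

Lemma bigcapv_with_notin V i (U : {vspace vT}) Om : i \notin Om ->
  (\bigcap_(j in Om) [eta V with i |-> U] j = \bigcap_(j in Om) V j)%VS.
Proof.
by move=> iNOm; apply: eq_bigr => j jOm /=; case: eqP jOm => // ->; rewrite (negPf iNOm).
Qed.

Lemma cap_bounded_add_line V i v : cap_bounded V ->
  (forall Om, i \in Om -> cap_tight V Om ->
     v \notin (V i + \bigcap_(j in Om :\ i) V j)%VS) ->
  cap_bounded [eta V with i |-> (V i + <[v]>)%VS].
Proof.
move=> hV v_free Om Om_neq0; have := hV _ Om_neq0.
have [iOm | iNOm] := boolP (i \in Om); last by rewrite bigcapv_with_notin.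
rewrite !(big_setD1 i iOm) bigcapv_with_notin ?setD11 //= eqxx.
have [tOm | ntOm] := boolP (cap_tight V Om).
  by rewrite dimv_cap_add_line_eq // v_free.
move: ntOm; rewrite /cap_tight (big_setD1 i iOm) => ntOm leOm.
by rewrite (leq_trans (dimv_cap_add_line _ _ v)) // ltn_neqAle ntOm leOm.
Qed.

Lemma cap_tight_cover V i : cap_bounded V -> (\dim (V i) < #|I| - 1)%N ->
  exists S : {vspace vT}, [/\ (V i <= S)%VS, (\dim S <= (\dim (V i)).+1)%N &
    forall Om, i \in Om -> cap_tight V Om ->
      (V i + \bigcap_(j in Om :\ i) V j <= S)%VS].
Proof.
move=> hV lt_Vi.
have [Om0 tOm0 | no_tight] := pickP (fun Om => (i \in Om) && cap_tight V Om); last first.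
  by exists (V i); split=> // Om iOm tOm; have := no_tight Om; rewrite iOm tOm.
case: (arg_minnP (P := fun Om => (i \in Om) && cap_tight V Om) (fun Om => #|Om|) tOm0)
  => N /andP [iN tN] minN.
have N_sub Om : i \in Om -> cap_tight V Om -> N \subset Om.
  move=> iOm tOm; have iNOm : i \in N :&: Om by rewrite inE iN.
  have tNOm : cap_tight V (N :&: Om) by apply: cap_tightI => //; apply/set0Pn; exists i.
  by apply/setIidPl/eqP; rewrite eqEcard subsetIl minN ?iNOm.
have Ni_neq0 : N :\ i != set0.
  apply: contraTneq tN => Ni0.
  by rewrite /cap_tight -(setD1K iN) Ni0 setU0 big_set1 cards1 ltn_eqF.
exists (V i + \bigcap_(j in N :\ i) V j)%VS; split.
- exact: addvSl.
- have := dimv_sum_cap (V i) (\bigcap_(j in N :\ i) V j).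
  have := hV _ Ni_neq0; have := max_card N; move/eqP: tN.
  rewrite (big_setD1 i iN) /= (cardsD1 i N) iN add1n; lia.
- by move=> Om iOm tOm; rewrite addvS ?bigcapvS ?setSD ?N_sub.
Qed.

Lemma exists_line_cap_bounded V i : (#|I| <= \dim {:vT})%N -> cap_bounded V ->
    (\dim (V i) < #|I| - 1)%N ->
  exists2 v, v \notin V i & cap_bounded [eta V with i |-> (V i + <[v]>)%VS].
Proof.
move=> dimI hV lt_Vi; have [S [ViS dimS coverS]] := cap_tight_cover hV lt_Vi.
have dimS_lt : (\dim S < \dim {:vT})%N.
  by apply: leq_trans (leq_ltn_trans dimS _) dimI; move: lt_Vi; rewrite ltn_subRL add1n.
have /subvPn [v _ vNS] : ~~ (fullv <= S)%VS.
  by apply: contraTN dimS_lt => /dimvS; rewrite leqNgt.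
exists v; first by apply: contra vNS; apply: (subvP ViS).
apply: cap_bounded_add_line => // Om iOm tOm.
by apply: contra vNS; apply: (subvP (coverS _ iOm tOm)).
Qed.

Lemma cap_bounded_dim_le V i : cap_bounded V -> (\dim (V i) <= #|I| - 1)%N.
Proof.
by move/(_ [set i]); rewrite big_set1 cards1; apply; apply/set0Pn; exists i; apply: set11.
Qed.

Lemma cap_bounded_extend V : (#|I| <= \dim {:vT})%N -> cap_bounded V ->
  exists V' : I -> {vspace vT}, (forall i, (V i <= V' i)%VS) /\ cap_bounded V' /\
    (forall i, \dim (V' i) = (#|I| - 1)%N).
Proof.
move=> dimI hV; have [m] := ubnP (\sum_i (#|I| - 1 - \dim (V i)))%N.
elim: m V hV => // m IH V hV deficit.
have [i lt_Vi | full] := pickP (fun i => \dim (V i) < #|I| - 1)%N; last first.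
  exists V; split; first by move=> i; apply: subvv.
  split=> [|i]; first exact: hV.
  by apply/eqP; rewrite eqn_leq cap_bounded_dim_le // leqNgt full.
have [v vNVi hV'] := exists_line_cap_bounded dimI hV lt_Vi.
have [|V' [VV' [hV'' dimV']]] := IH _ hV'.
  move: lt_Vi deficit; rewrite !(bigD1 i isT) /= eqxx dimv_add_line // ltnS.
  move=> lt_Vi deficit; apply: leq_trans _ deficit; rewrite -addSn.
  apply: leq_add; first lia.
  by apply: leq_sum => j /negPf ji; rewrite ji; apply: leqnn.
exists V'; split=> [j|]; last by split.
apply: subv_trans (VV' j) => /=.
by case: eqP => [-> | _]; [apply: addvSl | apply: subvv].
Qed.

End CapBounded.

Theorem mainTheorem11 (F : finFieldType) (n k : nat) (hkn : (k <= n)%N)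
  (V : 'I_k -> {vspace 'rV[F]_n}) :
  (forall Om : {set 'I_k}, Om != set0 ->
     (\dim (\bigcap_(i in Om) V i)%VS <= k - #|Om|)%N) ->
  exists V' : 'I_k -> {vspace 'rV[F]_n},
    (forall i, (V i <= V' i)%VS) /\
    (forall Om : {set 'I_k}, Om != set0 ->
       (\dim (\bigcap_(i in Om) V' i)%VS <= k - #|Om|)%N) /\
    (forall i, \dim (V' i) = (k - 1)%N).
Proof.
move=> hV.
have dimI : (#|'I_k| <= \dim {:'rV[F]_n})%N.
  by rewrite card_ord dimvf dim_matrix GRing.mul1r.
have hV' : cap_bounded V by move=> Om; rewrite card_ord; apply: hV.
have [V' [VV' [hV'' dimV']]] := cap_bounded_extend dimI hV'.
exists V'; split; first exact: VV'.
split=> [Om | i]; first by have := hV'' Om; rewrite card_ord.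
by rewrite dimV' card_ord.
Qed.
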